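(* Let $G$ and $H$ be Left dead-ends, and assume that no subposition of $G$ or of $H$ has a dominated option. If $G$ and $H$ are equal (i.e. $G \geq H$ and $H \geq G$), then $G \cong H$.
   Context: All games are finite partizan games; $\cong$ denotes identity of game trees. $o(G)$ is the misère outcome class, ordered $\mathscr{L} > \mathscr{N} > \mathscr{R}$, $\mathscr{L} > \mathscr{P} > \mathscr{R}$. A universe is a set of games closed under options, disjunctive sums, conjugates, and forming $\{\mathscr{G}^L\mid\mathscr{G}^R\}$ from nonempty finite subsets of it. For a universe $\mathcal{U}$, $G\geq_\mathcal{U} H$ means $o(G+X)\geq o(H+X)$ for all $X\in\mathcal{U}$. A Left dead-end is a game every subposition of which has no Left option. For Left dead-ends $G,H$, write $G\geq H$ if $G\geq_\mathcal{U} H$ for every universe $\mathcal{U}$. A Right option $G^{R_1}$ of a Left dead-end $G$ is dominated if $G^{R_1}\geq G^{R_2}$ for some other Right option $G^{R_2}$ of $G$. *)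

From Stdlib Require List.
From mathcomp Require Import all_boot.
Set Implicit Arguments. Unset Strict Implicit. Unset Printing Implicit Defensive.

Inductive game : Type := Node of seq game & seq game.

Definition lefts (G : game) : seq game := let: Node L _ := G in L.
Definition rights (G : game) : seq game := let: Node _ R := G in R.

(* Identity of game trees (options taken as sets, recursively): G ≅ H. *)
Fixpoint ident (G H : game) {struct G} : bool :=
  match G, H with
  | Node L1 R1, Node L2 R2 =>
      [&& all (fun x => has (fun y => ident x y) L2) L1,
          all (fun y => has (fun x => ident x y) L1) L2,
          all (fun x => has (fun y => ident x y) R2) R1 &
          all (fun y => has (fun x => ident x y) R1) R2]
  end.

(* Misere play: a player unable to move wins.
   wins_first G = (Left wins moving first in G, Right wins moving first in G). *)
Fixpoint wins_first (G : game) : bool * bool :=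
  match G with
  | Node L R =>
      ((nilp L) || has (fun p => ~~ p.2) (map wins_first L),
       (nilp R) || has (fun p => ~~ p.1) (map wins_first R))
  end.

Inductive outcome : Type := oL | oN | oP | oR.

Definition outc (G : game) : outcome :=
  match wins_first G with
  | (true, false) => oL
  | (true, true) => oN
  | (false, false) => oP
  | (false, true) => oR
  end.

(* partial order L > N > R, L > P > R (N, P incomparable) *)
Definition outcome_le (a b : outcome) : Prop :=
  match a, b with
  | oR, _ => True
  | _, oL => True
  | oN, oN => True
  | oP, oP => True
  | _, _ => False
  end.

Fixpoint gsum (G H : game) {struct G} : game :=
  let fix sumG (H : game) : game :=
    match G, H with
    | Node GL GR, Node HL HR =>
        Node (map (fun gl => gsum gl H) GL ++ map sumG HL)
             (map (fun gr => gsum gr H) GR ++ map sumG HR)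
    end in
  sumG H.

Fixpoint gconj (G : game) : game :=
  match G with Node L R => Node (map gconj R) (map gconj L) end.

Definition is_option (K G : game) : Prop :=
  List.In K (lefts G) \/ List.In K (rights G).

Definition universe (U : game -> Prop) : Prop :=
  [/\ (forall G K, U G -> is_option K G -> U K),
      (forall G H, U G -> U H -> U (gsum G H)),
      (forall G, U G -> U (gconj G)) &
      (forall A B : seq game, A <> [::] -> B <> [::] ->
         (forall x, List.In x A -> U x) -> (forall x, List.In x B -> U x) ->
         U (Node A B))].

Definition ge_in (U : game -> Prop) (G H : game) : Prop :=
  forall X, U X -> outcome_le (outc (gsum H X)) (outc (gsum G X)).

Inductive subpos : game -> game -> Prop :=
  | subpos_refl G : subpos G G
  | subpos_opt K G' G : is_option G' G -> subpos K G' -> subpos K G.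

Definition left_dead_end (G : game) : Prop :=
  forall K, subpos K G -> lefts K = [::].

(* For Left dead-ends: G >= H iff G >=_U H for every universe U. *)
Definition dge (G H : game) : Prop :=
  forall U, universe U -> ge_in U G H.

Definition dominated_right (G R1 : game) : Prop :=
  exists R2, List.In R2 (rights G) /\ ~~ ident R2 R1 /\ dge R1 R2.

Definition no_dominated_subpos (G : game) : Prop :=
  forall K, subpos K G -> forall R1, List.In R1 (rights K) -> ~ dominated_right K R1.

From mathcomp Require Import all_boot.
From Stdlib Require Import Classical.
Set Implicit Arguments. Unset Strict Implicit. Unset Printing Implicit Defensive.

(* Left dead-ends have no Left options, so everything is decided by their Right
   options.  The key fact is that if G >= H, every Right option g of G is >= some
   Right option h of H: otherwise pick, for each h, a game Z_h on which Right wins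
   g + Z_h but loses h + Z_h; with the misere adjoint g° (g + g° is a P-position),
   in X = {{. | g°}, Z_h (h in H^R) | 0} Right wins G + X by moving to g + X but
   loses H + X.  Applied in both directions this gives g >= h >= g' with g' in G^R;
   as G has no dominated options g' is identical to g, so g and h are equal and
   induction on G yields G identical to H. *)

Lemma allIn (T : Type) (p : pred T) (s : seq T) :
  reflect (forall x, List.In x s -> p x) (all p s).
Proof.
elim: s => [|y s IHs] /=; first by left.
apply: (iffP andP) => [[py /IHs ps] x [<- | /ps] // | ps].
by split; [apply: ps; left | apply/IHs => x sx; apply: ps; right].
Qed.

Lemma hasIn (T : Type) (p : pred T) (s : seq T) :
  reflect (exists2 x, List.In x s & p x) (has p s).
Proof.
elim: s => [|y s IHs] /=; first by right=> -[].
apply: (iffP orP) => [[py | /IHs [x sx px]] | [x [<- | sx] px]].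
- by exists y; first left.
- by exists x; first right.
- by left.
- by right; apply/IHs; exists x.
Qed.

Lemma In_map (T U : Type) (f : T -> U) (s : seq T) x :
  List.In x s -> List.In (f x) (map f s).
Proof. by elim: s => [|y s IHs] //= [-> | /IHs]; [left | right]. Qed.

Lemma In_mapP (T U : Type) (f : T -> U) (s : seq T) y :
  List.In y (map f s) <-> exists2 x, List.In x s & y = f x.
Proof.
elim: s => [|x s IHs] /=; first by split=> // -[].
rewrite IHs; split=> [[<- | [z sz ->]] | [z [<- | sz] ->]].
- by exists x; first left.
- by exists z; first right.
- by left.
- by right; exists z.
Qed.

Lemma game_ind_In (P : game -> Prop) :
  (forall L R, (forall x, List.In x L -> P x) -> (forall x, List.In x R -> P x) ->
     P (Node L R)) ->
  forall G, P G.
Proof.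
move=> IH; fix IHG 1 => -[L R].
(* IHG is guarded only on elements produced by list_ind: keep automation away from it. *)
apply: IH; [move: L | move: R]; elim=> [x [] | y s IHs x [<- | /IHs Px]];
  solve [assumption | exact: IHG].
Qed.

Definition matched (R : game -> game -> Prop) (A B : seq game) : Prop :=
  (forall a, List.In a A -> exists2 b, List.In b B & R a b) /\
  (forall b, List.In b B -> exists2 a, List.In a A & R a b).

Lemma matched_cat R A1 A2 B1 B2 :
  matched R A1 B1 -> matched R A2 B2 -> matched R (A1 ++ A2) (B1 ++ B2).
Proof.
move=> [A1B1 B1A1] [A2B2 B2A2]; split.
- move=> a /List.in_app_iff [/A1B1 | /A2B2] [b Bb Rab];
    by exists b => //; apply/List.in_app_iff; auto.
- move=> b /List.in_app_iff [/B1A1 | /B2A2] [a Aa Rab];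
    by exists a => //; apply/List.in_app_iff; auto.
Qed.

Lemma matched_map (R R' : game -> game -> Prop) f g A B :
  (forall a b, R a b -> R' (f a) (g b)) -> matched R A B -> matched R' (map f A) (map g B).
Proof.
move=> RR' [AB BA]; split.
- move=> _ /In_mapP [a /AB [b Bb Rab] ->].
  by exists (g b); [apply: In_map | apply: RR'].
- move=> _ /In_mapP [b /BA [a Aa Rab] ->].
  by exists (f a); [apply: In_map | apply: RR'].
Qed.

Lemma matched_refl A : matched eq A A.
Proof. by split=> a Aa; exists a. Qed.

Lemma matched_choice (P : game -> game -> Prop) A :
  (forall a, List.In a A -> exists b, P a b) -> exists B, matched P A B.
Proof.
elim: A => [|a A IHA] PA; first by exists [::]; split=> ? [].
have [b Pab] := PA a (or_introl erefl).
have [B [AB BA]] := IHA (fun x Ax => PA x (or_intror Ax)).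
exists (b :: B); split.
- move=> x [<- | /AB [y By Pxy]]; first by exists b; first left.
  by exists y; first right.
- move=> y [<- | /BA [x Ax Pxy]]; first by exists a; first left.
  by exists x; first right.
Qed.

Lemma matched_nilp_has R (p : pred game) A B :
  matched R A B -> (forall a b, List.In a A -> R a b -> p a = p b) ->
  (nilp A || has p A) = (nilp B || has p B).
Proof.
move=> [AB BA] Rp; congr orb.
  case: A B AB BA {Rp} => [|a A] [|b B] // AB BA.
  - by have [? []] := BA b (or_introl erefl).
  - by have [? []] := AB a (or_introl erefl).
apply/hasIn/hasIn => [[a Aa pa] | [b Bb pb]].
- by have [b Bb Rab] := AB a Aa; exists b; rewrite // -(Rp a b).
- by have [a Aa Rab] := BA b Bb; exists a; rewrite // (Rp a b).
Qed.

Lemma all_hasIn (r : game -> game -> bool) A B :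
  reflect (forall a, List.In a A -> exists2 b, List.In b B & r a b)
          (all (fun a => has (r a) B) A).
Proof.
apply: (iffP (allIn _ _)) => AB a /AB; first by move/hasIn.
by move=> ?; apply/hasIn.
Qed.

Lemma identE G H :
  ident G H <-> matched ident (lefts G) (lefts H) /\ matched ident (rights G) (rights H).
Proof.
case: G H => [L1 R1] [L2 R2] /=; split.
  by case/and4P=> /all_hasIn ? /all_hasIn ? /all_hasIn ? /all_hasIn ?.
by case=> -[/all_hasIn ? /all_hasIn ?] [/all_hasIn ? /all_hasIn ?]; apply/and4P.
Qed.

Lemma lefts_gsum G H :
  lefts (gsum G H) = map (gsum^~ H) (lefts G) ++ map (gsum G) (lefts H).
Proof. by case: G H => [? ?] [? ?]. Qed.

Lemma rights_gsum G H :
  rights (gsum G H) = map (gsum^~ H) (rights G) ++ map (gsum G) (rights H).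
Proof. by case: G H => [? ?] [? ?]. Qed.

Lemma In_lefts_gsum G H x : List.In x (lefts (gsum G H)) <->
  (exists2 g, List.In g (lefts G) & x = gsum g H) \/
  (exists2 h, List.In h (lefts H) & x = gsum G h).
Proof. by rewrite lefts_gsum List.in_app_iff !In_mapP. Qed.

Lemma In_rights_gsum G H x : List.In x (rights (gsum G H)) <->
  (exists2 g, List.In g (rights G) & x = gsum g H) \/
  (exists2 h, List.In h (rights H) & x = gsum G h).
Proof. by rewrite rights_gsum List.in_app_iff !In_mapP. Qed.

Definition left_wins (G : game) : bool := (wins_first G).1.
Definition right_wins (G : game) : bool := (wins_first G).2.

Lemma left_winsE G :
  left_wins G = nilp (lefts G) || has (fun x => ~~ right_wins x) (lefts G).
Proof. by case: G => L R; rewrite /left_wins /= has_map. Qed.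

Lemma right_winsE G :
  right_wins G = nilp (rights G) || has (fun x => ~~ left_wins x) (rights G).
Proof. by case: G => L R; rewrite /right_wins /= has_map. Qed.

Lemma left_wins_nil G : lefts G = [::] -> left_wins G.
Proof. by rewrite left_winsE => ->. Qed.

Lemma left_wins_move G x : List.In x (lefts G) -> ~~ right_wins x -> left_wins G.
Proof. by move=> Gx Rx; rewrite left_winsE; apply/orP; right; apply/hasIn; exists x. Qed.

Lemma right_wins_move G x : List.In x (rights G) -> ~~ left_wins x -> right_wins G.
Proof. by move=> Gx Lx; rewrite right_winsE; apply/orP; right; apply/hasIn; exists x. Qed.

Lemma left_loses G y : List.In y (lefts G) ->
  (forall x, List.In x (lefts G) -> right_wins x) -> ~~ left_wins G.
Proof.
move=> Gy GR; rewrite left_winsE negb_or; apply/andP; split; first by case: (lefts G) Gy.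
by apply/hasIn=> -[x /GR ->].
Qed.

Lemma right_loses G y : List.In y (rights G) ->
  (forall x, List.In x (rights G) -> left_wins x) -> ~~ right_wins G.
Proof.
move=> Gy GL; rewrite right_winsE negb_or; apply/andP; split; first by case: (rights G) Gy.
by apply/hasIn=> -[x /GL ->].
Qed.

Definition bisimulation (R : game -> game -> Prop) : Prop :=
  forall a b, R a b -> matched R (lefts a) (lefts b) /\ matched R (rights a) (rights b).

Lemma wins_firstE G : wins_first G = (left_wins G, right_wins G).
Proof. by rewrite /left_wins /right_wins; case: (wins_first G). Qed.

Lemma bisimulation_wins_first R a b :
  bisimulation R -> R a b -> wins_first a = wins_first b.
Proof.
move=> bisR; elim/game_ind_In: a b => L R' IHL IHR b /bisR [ML MR].
rewrite !wins_firstE left_winsE right_winsE.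
rewrite [left_wins b]left_winsE [right_wins b]right_winsE; congr pair.
- apply: (matched_nilp_has ML) => a c La Rac.
  by rewrite /right_wins (IHL a La c Rac).
- apply: (matched_nilp_has MR) => a c Ra Rac.
  by rewrite /left_wins (IHR a Ra c Rac).
Qed.

Lemma bisimulation_gsum R : bisimulation R ->
  bisimulation (fun a b => exists x y X, R x y /\ a = gsum x X /\ b = gsum y X).
Proof.
move=> bisR a b [x [y [X [Rxy [-> ->]]]]]; have [ML MR] := bisR x y Rxy.
rewrite !lefts_gsum !rights_gsum; split; apply: matched_cat.
- by apply: matched_map ML => u v Ruv; exists u, v, X.
- by apply: matched_map (matched_refl _) => Y _ <-; exists x, y, Y.
- by apply: matched_map MR => u v Ruv; exists u, v, X.
- by apply: matched_map (matched_refl _) => Y _ <-; exists x, y, Y.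
Qed.

Lemma ident_bisimulation : bisimulation (fun G H => ident G H).
Proof. by move=> G H /identE. Qed.

Lemma ident_wins_first_gsum x y X :
  ident x y -> wins_first (gsum x X) = wins_first (gsum y X).
Proof.
move=> xy; apply: (bisimulation_wins_first (bisimulation_gsum ident_bisimulation)).
by exists x, y, X.
Qed.

Definition ge_all (G H : game) : Prop :=
  forall X, outcome_le (outc (gsum H X)) (outc (gsum G X)).

Lemma dgeE G H : dge G H <-> ge_all G H.
Proof.
split=> [GH X | GH U _ X _]; last exact: GH.
by apply: (GH (fun=> True)).
Qed.

Lemma outcome_leE a b : outcome_le (outc a) (outc b) <->
  (left_wins a -> left_wins b) /\ (right_wins b -> right_wins a).
Proof.
rewrite /outc /left_wins /right_wins.
case: (wins_first a) => [[] []]; case: (wins_first b) => [[] []] /=; split=> //;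
  by case=> L R; first [by move: (L isT) | by move: (R isT)].
Qed.

Lemma ge_all_trans G H K : ge_all G H -> ge_all H K -> ge_all G K.
Proof.
move=> GH HK X; move: (GH X) (HK X).
by case: (outc (gsum G X)); case: (outc (gsum H X)); case: (outc (gsum K X)).
Qed.

Lemma ident_ge_all x y : ident x y -> ge_all x y.
Proof.
by move=> xy X; rewrite /outc (ident_wins_first_gsum X xy); case: (wins_first _) => [[] []].
Qed.

Lemma subpos_right K G g : List.In g (rights G) -> subpos K g -> subpos K G.
Proof. by move=> Gg; apply: subpos_opt; right. Qed.

Lemma left_dead_end_lefts G : left_dead_end G -> lefts G = [::].
Proof. by apply; constructor. Qed.

Lemma left_dead_end_right G g : left_dead_end G -> List.In g (rights G) -> left_dead_end g.
Proof. by move=> dG Gg K /(subpos_right Gg) /dG. Qed.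

Lemma no_dominated_subpos_right G g :
  no_dominated_subpos G -> List.In g (rights G) -> no_dominated_subpos g.
Proof. by move=> nG Gg K /(subpos_right Gg) /nG. Qed.

Lemma left_wins_dead_end_gsum D Z :
  left_dead_end D -> lefts Z = [::] -> left_wins (gsum D Z).
Proof.
by move=> /left_dead_end_lefts dD dZ; apply: left_wins_nil; rewrite lefts_gsum dD dZ.
Qed.

Definition zero : game := Node [::] [::].
Definition star : game := Node [:: zero] [:: zero].

(* The misere adjoint of a game without Left options: 0° = *, G° = {(G^R)° | *}. *)
Fixpoint adjoint (G : game) : game :=
  let: Node _ R := G in if R is [::] then star else Node (map adjoint R) [:: star].

Lemma adjoint_sum_is_P D : left_dead_end D ->
  ~~ left_wins (gsum D (adjoint D)) /\ ~~ right_wins (gsum D (adjoint D)).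
Proof.
elim/game_ind_In: D => L R _ IHR dD.
have /= EL := left_dead_end_lefts dD; subst L.
case: R IHR dD => [|r0 R] // IHR dD.
set D := Node [::] (r0 :: R).
have dR r : List.In r (rights D) -> left_dead_end r := left_dead_end_right dD.
have adjD : lefts (adjoint D) = map adjoint (rights D) by [].
have adjR r : List.In r (rights D) -> List.In (adjoint r) (lefts (adjoint D)).
  by rewrite adjD; apply: In_map.
have r0D : List.In r0 (rights D) by left.
split.
- have Dr0 : List.In (gsum D (adjoint r0)) (lefts (gsum D (adjoint D))).
    by apply/In_lefts_gsum; right; exists (adjoint r0); first exact: adjR.
  apply: (left_loses Dr0) => x /In_lefts_gsum [[? []] | [Y + ->]].
  rewrite adjD => /In_mapP [r Dr ->].
  have rr : List.In (gsum r (adjoint r)) (rights (gsum D (adjoint r))).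
    by apply/In_rights_gsum; left; exists r.
  exact: right_wins_move rr (IHR r Dr (dR r Dr)).1.
- have Dstar : List.In (gsum D star) (rights (gsum D (adjoint D))).
    by apply/In_rights_gsum; right; exists star; first left.
  apply: (right_loses Dstar) => x /In_rights_gsum [[r Dr ->] | [Y [<- | []] ->]].
    have rr : List.In (gsum r (adjoint r)) (lefts (gsum r (adjoint D))).
      by apply/In_lefts_gsum; right; exists (adjoint r); first exact: adjR.
    exact: left_wins_move rr (IHR r Dr (dR r Dr)).2.
  have Dzero : List.In (gsum D zero) (lefts (gsum D star)).
    by apply/In_lefts_gsum; right; exists zero; first left.
  have r0zero : List.In (gsum r0 zero) (rights (gsum D zero)).
    by apply/In_rights_gsum; left; exists r0.
  apply: (left_wins_move Dzero); apply: (right_loses r0zero).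
  move=> y /In_rights_gsum [[r Dr ->] | [? []]].
  by apply: left_wins_dead_end_gsum; first exact: dR.
Qed.

Lemma not_ge_all_witness G H : left_dead_end G -> left_dead_end H -> ~ ge_all G H ->
  exists Z, right_wins (gsum G Z) /\ ~~ right_wins (gsum H Z).
Proof.
move=> dG dH nGH; apply: NNPP => noZ; apply: nGH => X; apply/outcome_leE; split.
- (* Right hands Left the move in X through {. | X}. *)
  move=> LHX; apply: contraT => nLGX; exfalso; apply: noZ.
  exists (Node [::] [:: X]); split.
    have GX : List.In (gsum G X) (rights (gsum G (Node [::] [:: X]))).
      by apply/In_rights_gsum; right; exists X; first left.
    exact: right_wins_move GX nLGX.
  have HX : List.In (gsum H X) (rights (gsum H (Node [::] [:: X]))).
    by apply/In_rights_gsum; right; exists X; first left.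
  apply: (right_loses HX) => y /In_rights_gsum [[h Hh ->] | [Y [<- | []] ->]] //.
  exact: left_wins_dead_end_gsum (left_dead_end_right dH Hh) _.
- move=> RGX; apply: contraT => nRHX; exfalso; apply: noZ; by exists X.
Qed.

Lemma ge_all_right_option G H g : left_dead_end G -> left_dead_end H -> ge_all G H ->
  List.In g (rights G) -> exists2 h, List.In h (rights H) & ge_all g h.
Proof.
move=> dG dH GH Gg; apply: NNPP => no_h.
have dg := left_dead_end_right dG Gg.
have [Zs [HZs ZsH]] : exists Zs,
    matched (fun h Z => right_wins (gsum g Z) /\ ~~ right_wins (gsum h Z)) (rights H) Zs.
  apply: matched_choice => h Hh; apply: not_ge_all_witness => //.
    exact: left_dead_end_right dH Hh.
  by move=> gh; apply: no_h; exists h.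
set X := Node (Node [::] [:: adjoint g] :: Zs) [:: zero].
have Lg : ~~ left_wins (gsum g X).
  have gY : List.In (gsum g (Node [::] [:: adjoint g])) (lefts (gsum g X)).
    by apply/In_lefts_gsum; right; exists (Node [::] [:: adjoint g]); first left.
  apply: (left_loses gY) => y /In_lefts_gsum [[?] | [Y + ->]].
    by rewrite left_dead_end_lefts.
  case=> [<- | /ZsH [h _ []] //].
  have gg : List.In (gsum g (adjoint g)) (rights (gsum g (Node [::] [:: adjoint g]))).
    by apply/In_rights_gsum; right; exists (adjoint g); first left.
  exact: right_wins_move gg (adjoint_sum_is_P dg).1.
have RG : right_wins (gsum G X).
  have gX : List.In (gsum g X) (rights (gsum G X)) by apply/In_rights_gsum; left; exists g.
  exact: right_wins_move gX Lg.
have nRH : ~~ right_wins (gsum H X).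
  have H0 : List.In (gsum H zero) (rights (gsum H X)).
    by apply/In_rights_gsum; right; exists zero; first left.
  apply: (right_loses H0) => y /In_rights_gsum [[h Hh ->] | [Y [<- | []] ->]].
    have [Z Zs_Z [_ nRhZ]] := HZs h Hh.
    have hZ : List.In (gsum h Z) (lefts (gsum h X)).
      by apply/In_lefts_gsum; right; exists Z; first right.
    exact: left_wins_move hZ nRhZ.
  exact: left_wins_dead_end_gsum dH _.
by move: nRH; rewrite ((outcome_leE _ _).1 (GH X)).2.
Qed.

Lemma nondominated_ident G g g' : no_dominated_subpos G ->
  List.In g (rights G) -> List.In g' (rights G) -> ge_all g g' -> ident g' g.
Proof.
move=> nG Gg Gg' gg'; apply: contraT => nid; exfalso.
by apply: (nG G (subpos_refl G) g Gg); exists g'; split; last split; last apply/dgeE.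
Qed.

Lemma equal_right_option G H g :
  left_dead_end G -> left_dead_end H -> no_dominated_subpos G ->
  ge_all G H -> ge_all H G -> List.In g (rights G) ->
  exists2 h, List.In h (rights H) & ge_all g h /\ ge_all h g.
Proof.
move=> dG dH nG GH HG Gg.
have [h Hh gh] := ge_all_right_option dG dH GH Gg.
have [g' Gg' hg'] := ge_all_right_option dH dG HG Hh.
have g'g := nondominated_ident nG Gg Gg' (ge_all_trans gh hg').
by exists h; last split; last exact: ge_all_trans hg' (ident_ge_all g'g).
Qed.

Theorem mainTheorem2 (G H : game) :
  left_dead_end G -> left_dead_end H ->
  no_dominated_subpos G -> no_dominated_subpos H ->
  dge G H -> dge H G ->
  ident G H.
Proof.
elim/game_ind_In: G H => L R _ IHR H dG dH nG nH /dgeE GH /dgeE HG.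
have partner g h : List.In g R -> List.In h (rights H) -> ge_all g h -> ge_all h g ->
    ident g h.
  move=> Rg Hh gh hg; apply: IHR => //; try exact/dgeE.
  - exact: left_dead_end_right dG Rg.
  - exact: left_dead_end_right dH Hh.
  - exact: no_dominated_subpos_right nG Rg.
  - exact: no_dominated_subpos_right nH Hh.
apply/identE; rewrite (left_dead_end_lefts dG) (left_dead_end_lefts dH).
split; first by split=> ? [].
split.
- move=> g Rg; have [h Hh [gh hg]] := equal_right_option dG dH nG GH HG Rg.
  by exists h; last exact: partner.
- move=> h Hh; have [g Rg [hg gh]] := equal_right_option dH dG nH HG GH Hh.
  by exists g; last exact: partner.
Qed.
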